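(* Let $n$ be a positive integer, let $X^+=\{x_1^+,\dots,x_n^+\}$, $X^-=\{x_1^-,\dots,x_n^-\}$ and $X=X^+\cup X^-$, totally ordered by $x_1^+<x_1^-<x_2^+<x_2^-<\cdots<x_n^+<x_n^-$. Then every monochromatic noncrossing partition of $X$ has at least $n+1$ blocks.
   Context: A partition $P$ of a finite totally ordered set $X$ is an unordered collection of nonempty, pairwise disjoint subsets of $X$ (called blocks) whose union is $X$; $|P|$ denotes the number of blocks. Two blocks $B,B'$ of $P$ cross if there exist elements $x_i<x_j<x_k<x_\ell$ of $X$ with $x_i,x_k\in B$ and $x_j,x_\ell\in B'$; $P$ is noncrossing if no two of its blocks cross. With $X=X^+\cup X^-$ as in the claim, a partition $P$ of $X$ is monochromatic if every block is a subset of $X^+$ or a subset of $X^-$. *)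

From mathcomp Require Import all_boot.
Set Implicit Arguments. Unset Strict Implicit. Unset Printing Implicit Defensive.

(* The totally ordered set X = {x_1^+ < x_1^- < ... < x_n^+ < x_n^-} is
   modelled by 'I_(2n) with its natural order: x_i^+ is the element 2(i-1)
   and x_i^- is the element 2(i-1)+1.  Hence X^+ = even elements,
   X^- = odd elements. *)

Definition in_Xplus (n : nat) (x : 'I_(2 * n)) : bool := ~~ odd x.
Definition in_Xminus (n : nat) (x : 'I_(2 * n)) : bool := odd x.

Definition blocks_cross (T : finType) (ord : rel T) (B B' : {set T}) : Prop :=
  exists xi xj xk xl : T,
    [/\ ord xi xj, ord xj xk, ord xk xl &
        [/\ xi \in B, xk \in B, xj \in B' & xl \in B']].

Definition noncrossing (n : nat) (P : {set {set 'I_(2 * n)}}) : Prop :=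
  forall B B', B \in P -> B' \in P -> B != B' ->
    ~ blocks_cross (fun x y : 'I_(2 * n) => x < y) B B'.

Definition monochromatic (n : nat) (P : {set {set 'I_(2 * n)}}) : Prop :=
  forall B, B \in P ->
    (B \subset [set x | in_Xplus x]) \/ (B \subset [set x | in_Xminus x]).

From mathcomp Require Import all_boot zify.
Set Implicit Arguments. Unset Strict Implicit. Unset Printing Implicit Defensive.

(* Label each point of X by its block; the claim becomes: a noncrossing labelling
   of N >= 1 points in which equal labels force equal parity uses more than N/2
   labels.  If all labels are distinct this is clear.  Otherwise take a closest
   pair i < j of equal labels: the point i+1 lies strictly inside it (parity) and
   is a singleton, since another occurrence of its label would either cross the
   pair or form a closer pair.  Deleting the points i+1 and i+2 keeps the
   labelling noncrossing and the parities alternating, loses at least one label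
   and two points, so induction applies. *)

Section Labellings.

Variables (N : nat) (lab : nat -> nat).

Definition noncrossing_labelling := forall a b c d,
  a < b -> b < c -> c < d -> d < N -> lab a = lab c -> lab b = lab d -> lab a = lab b.

Definition parity_labelling :=
  forall a b, a < N -> b < N -> lab a = lab b -> odd a = odd b.

Definition labels := [seq lab i | i <- iota 0 N].

Definition nb_labels := size (undup labels).

Lemma nb_labels_uniq : uniq labels -> nb_labels = N.
Proof. by move=> uniq_lab; rewrite /nb_labels undup_id // size_map size_iota. Qed.

Lemma nb_labels_leq K : (forall i, i < N -> lab i < K) -> nb_labels <= K.
Proof.
move=> lab_lt; rewrite -(size_iota 0 K); apply: uniq_leq_size (undup_uniq _) _.
move=> y; rewrite mem_undup => /mapP[i]; rewrite !mem_iota => /andP[_ lt_iN] ->.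
exact: lab_lt.
Qed.

Lemma closest_equal_labels : ~~ uniq labels ->
  exists i j, [/\ i < j, j < N, lab i = lab j &
    forall k l, k < l -> l < N -> l - k < j - i -> lab k <> lab l].
Proof.
move=> /(uniqPn 0)[i0 [j0 []]]; rewrite size_map size_iota => lt_ij lt_jN.
rewrite !(nth_map 0) ?size_iota ?nth_iota ?(ltn_trans lt_ij) // !add0n => eq_ij.
pose gap d := has (fun k => (k < k + d < N) && (lab k == lab (k + d))) (iota 0 N).
have gap_ex : exists d, gap d.
  exists (j0 - i0); apply/hasP; exists i0; first by rewrite mem_iota; lia.
  by rewrite (subnKC (ltnW lt_ij)) lt_ij lt_jN eq_ij eqxx.
case: (ex_minnP gap_ex) => d /hasP[i _ /andP[/andP[lt_i_id lt_idN] /eqP eq_i_id]].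
move=> min_d.
exists i, (i + d); split => // k l lt_kl lt_lN lt_gap eq_kl.
suff: d <= l - k by rewrite addKn in lt_gap; lia.
apply: min_d; apply/hasP; exists k; first by rewrite mem_iota; lia.
by rewrite (subnKC (ltnW lt_kl)) lt_kl lt_lN eq_kl eqxx.
Qed.

Hypotheses (nc : noncrossing_labelling) (par : parity_labelling).

Lemma singleton_after_closest_pair i j :
    i < j -> j < N -> lab i = lab j ->
    (forall k l, k < l -> l < N -> l - k < j - i -> lab k <> lab l) ->
  i.+1 < j /\ forall k, k < N -> lab k = lab i.+1 -> k = i.+1.
Proof.
move=> lt_ij lt_jN eq_ij closest.
have lt_next : i.+1 < j.
  rewrite ltn_neqAle lt_ij andbT; apply/eqP => eq_next.
  move: (par (ltn_trans lt_ij lt_jN) lt_jN eq_ij); rewrite -eq_next /=.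
  by case: (odd i).
have neq_next : lab i <> lab i.+1 by apply: closest; lia.
split=> // k lt_kN eq_k.
case: (ltngtP k i.+1) => [lt_k_next | lt_next_k | //].
- exfalso; apply: neq_next; rewrite -eq_k.
  case: (ltngtP k i) => [lt_ki | lt_ik | -> //]; last by lia.
  by rewrite (nc lt_ki (ltnSn i) lt_next lt_jN eq_k eq_ij).
- case: (ltngtP k j) => [lt_kj | lt_jk | eq_kj].
  + by exfalso; apply: (closest _ _ lt_next_k lt_kN _ (esym eq_k)); lia.
  + by exfalso; apply: neq_next (nc (ltnSn i) lt_next lt_jk lt_kN eq_ij (esym eq_k)).
  + by exfalso; apply: neq_next; rewrite eq_ij -eq_kj.
Qed.

Lemma exists_singleton_label : ~~ uniq labels ->
  exists x, [/\ 0 < x, x.+1 < N & forall k, k < N -> lab k = lab x -> k = x].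
Proof.
move=> /closest_equal_labels[i [j [lt_ij lt_jN eq_ij closest]]].
have [lt_next single] := singleton_after_closest_pair lt_ij lt_jN eq_ij closest.
by exists i.+1; split=> //; apply: leq_ltn_trans lt_jN.
Qed.

End Labellings.

Definition bump2 x k := if k < x then k else k.+2.

Lemma ltn_bump2 x : {mono bump2 x : a b / a < b}.
Proof. by move=> a b; rewrite /bump2; case: (ltnP a x); case: (ltnP b x); lia. Qed.

Lemma bump2_neq x k : bump2 x k != x.
Proof. by rewrite /bump2; case: (ltnP k x); lia. Qed.

Lemma bump2_ltn x [N k] : k < N -> bump2 x k < N.+2.
Proof. by rewrite /bump2; case: (ltnP k x); lia. Qed.

Lemma odd_bump2 x k : odd (bump2 x k) = odd k.
Proof. by rewrite /bump2; case: (ltnP k x) => //= _; rewrite negbK. Qed.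

Section RemovePair.

Variables (N x : nat) (lab : nat -> nat).

Lemma noncrossing_bump2 :
  noncrossing_labelling N.+2 lab -> noncrossing_labelling N (lab \o bump2 x).
Proof.
move=> nc a b c d lt_ab lt_bc lt_cd lt_dN.
by apply: nc; rewrite ?ltn_bump2 ?bump2_ltn.
Qed.

Lemma parity_bump2 :
  parity_labelling N.+2 lab -> parity_labelling N (lab \o bump2 x).
Proof.
move=> par a b lt_aN lt_bN /par; rewrite !odd_bump2; apply; exact: bump2_ltn.
Qed.

Lemma nb_labels_bump2 : x < N.+2 ->
    (forall k, k < N.+2 -> lab k = lab x -> k = x) ->
  nb_labels N (lab \o bump2 x) < nb_labels N.+2 lab.
Proof.
move=> lt_xN single.
have lab_x : lab x \in undup (labels N.+2 lab).
  by rewrite mem_undup map_f // mem_iota.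
have sub : {subset undup (labels N (lab \o bump2 x)) <= rem (lab x) (undup (labels N.+2 lab))}.
  move=> y; rewrite mem_undup => /mapP[k]; rewrite mem_iota add0n => /andP[_ lt_kN] ->.
  have lt_bump := bump2_ltn x lt_kN.
  rewrite mem_rem_uniq ?undup_uniq // inE; apply/andP; split.
    by apply: contraNneq (bump2_neq x k) => /(single _ lt_bump)/eqP.
  by rewrite mem_undup; apply/mapP; exists (bump2 x k); rewrite ?mem_iota.
have := uniq_leq_size (undup_uniq _) sub.
have size_pos : 0 < size (undup (labels N.+2 lab)) by case: (undup _) lab_x.
by rewrite size_rem // /nb_labels; lia.
Qed.

End RemovePair.

Lemma nb_labels_gt_half N lab : 0 < N ->
  noncrossing_labelling N lab -> parity_labelling N lab -> N./2 < nb_labels N lab.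
Proof.
elim/ltn_ind: N lab => N IH lab N_gt0 nc par.
have [uniq_lab | /(exists_singleton_label nc par)[x [x_gt0 lt_xN single]]] :=
  boolP (uniq (labels N lab)).
  by rewrite nb_labels_uniq //; lia.
case: N => [|[|M]] in IH N_gt0 nc par lt_xN single *; try lia.
have M_gt0 : 0 < M by lia.
have := IH M (ltnW (ltnSn _)) (lab \o bump2 x) M_gt0 (noncrossing_bump2 nc) (parity_bump2 par).
have := nb_labels_bump2 (ltnW lt_xN) single.
lia.
Qed.

Section BlockLabelling.

Variables (N : nat) (P : {set {set 'I_N}}).
Hypothesis coverP : cover P = [set: 'I_N].

Definition block_label (i : nat) : nat :=
  if insub i is Some x then index (pblock P x) (enum P) else 0.

Lemma block_labelE (x : 'I_N) : block_label x = index (pblock P x) (enum P).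
Proof. by rewrite /block_label valK. Qed.

Lemma in_pblock (x : 'I_N) : x \in pblock P x.
Proof. by rewrite mem_pblock coverP inE. Qed.

Lemma pblock_in (x : 'I_N) : pblock P x \in P.
Proof. by rewrite pblock_mem // coverP inE. Qed.

Lemma block_label_lt i : i < N -> block_label i < #|P|.
Proof.
move=> lt_iN; rewrite (block_labelE (Ordinal lt_iN)) cardE index_mem.
by rewrite mem_enum pblock_in.
Qed.

Lemma block_label_inj (x y : 'I_N) :
  block_label x = block_label y -> pblock P x = pblock P y.
Proof.
have pblock_in_enum z : pblock P z \in enum P by rewrite mem_enum pblock_in.
rewrite !block_labelE => eq_xy.
by rewrite -(nth_index set0 (pblock_in_enum x)) eq_xy nth_index.
Qed.

Lemma block_label_noncrossing :
    (forall B B', B \in P -> B' \in P -> B != B' ->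
       ~ blocks_cross (fun x y : 'I_N => x < y) B B') ->
  noncrossing_labelling N block_label.
Proof.
move=> nc a b c d lt_ab lt_bc lt_cd lt_dN.
pose xd := Ordinal lt_dN; pose xc := Ordinal (ltn_trans lt_cd lt_dN).
pose xb := Ordinal (ltn_trans lt_bc (ltn_trans lt_cd lt_dN)).
pose xa := Ordinal (ltn_trans lt_ab (ltn_trans lt_bc (ltn_trans lt_cd lt_dN))).
move=> /(block_label_inj (x:=xa) (y:=xc)) eq_ac /(block_label_inj (x:=xb) (y:=xd)) eq_bd.
have [eq_ab|neq_ab] := eqVneq (pblock P xa) (pblock P xb).
  by rewrite -[a]/(val xa) -[b]/(val xb) !block_labelE eq_ab.
have xc_in : xc \in pblock P xa by rewrite eq_ac in_pblock.
have xd_in : xd \in pblock P xb by rewrite eq_bd in_pblock.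
case: (nc _ _ (pblock_in xa) (pblock_in xb) neq_ab).
by exists xa, xb, xc, xd; rewrite !in_pblock.
Qed.

Lemma block_label_parity :
    (forall B, B \in P -> {in B &, forall x y : 'I_N, odd x = odd y}) ->
  parity_labelling N block_label.
Proof.
move=> mono a b lt_aN lt_bN.
pose xa := Ordinal lt_aN; pose xb := Ordinal lt_bN.
move=> /(block_label_inj (x:=xa) (y:=xb)) eq_ab.
by apply: (mono _ (pblock_in xa) xa xb (in_pblock xa)); rewrite eq_ab in_pblock.
Qed.

End BlockLabelling.

Lemma monochromatic_odd n (P : {set {set 'I_(2 * n)}}) : monochromatic P ->
  forall B, B \in P -> {in B &, forall x y : 'I_(2 * n), odd x = odd y}.
Proof.
move=> mono B /mono[] /subsetP sub x y /sub + /sub; rewrite !inE /in_Xplus /in_Xminus.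
  by move=> /negPf -> /negPf ->.
by move=> -> ->.
Qed.

Theorem lemma3p5 (n : nat) (P : {set {set 'I_(2 * n)}}) :
  0 < n ->
  partition P [set: 'I_(2 * n)] ->
  noncrossing P ->
  monochromatic P ->
  n.+1 <= #|P|.
Proof.
move=> n_gt0 /and3P[/eqP coverP _ _] nc mono.
have N_gt0 : 0 < 2 * n by rewrite muln_gt0.
have := nb_labels_gt_half N_gt0 (block_label_noncrossing coverP nc)
  (block_label_parity coverP (monochromatic_odd mono)).
have -> : (2 * n)./2 = n by rewrite mul2n doubleK.
move=> /leq_trans; apply; exact: nb_labels_leq (block_label_lt coverP).
Qed.
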